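(* Let $G=(V,E)$ be a finite simple graph with $|E|=2|V|-3$. Then the graphic matroid of $G$ has a rainbow circuit-free coloring using each color at most twice if and only if $G$ can be constructed from $K_2$ (a single edge) by a sequence of (H0) operations.
   Context: The graphic matroid of $G$ has ground set $E$, independent sets being the edge sets of forests; its circuits are the edge sets of cycles. A coloring of $E$ is a partition into nonempty color classes; it is rainbow circuit-free if no cycle of $G$ has all its edges of pairwise different colors. The (H0) operation on a graph adds a new vertex $z$ together with edges $uz$ and $vz$, where $u,v$ are two distinct already existing vertices. *)

From mathcomp Require Import all_boot.
Set Implicit Arguments. Unset Strict Implicit. Unset Printing Implicit Defensive.

Section Graphs.
Variable T : finType.

(* A finite simple graph on vertex set T: e symmetric and irreflexive.
   Its edge set: the 2-element vertex sets {x,y} with e x y. *)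
Definition edges (e : rel T) : {set {set T}} :=
  [set A : {set T} | [exists x : T, exists y : T, e x y && (A == [set x; y])]].

Definition cycle_edges (s : seq T) : {set {set T}} :=
  [set [set x; next s x] | x in s].

Definition is_graph_cycle (e : rel T) (s : seq T) : Prop :=
  ucycle e s /\ 2 < size s.

(* A set of edges C is rainbow w.r.t. the colouring (partition) P:
   its edges have pairwise different colours. *)
Definition rainbow (P : {set {set {set T}}}) (C : {set {set T}}) : Prop :=
  forall B, B \in P -> #|B :&: C| <= 1.

(* Rainbow-circuit-free colouring of the graphic matroid of G:
   a partition of E(G) into nonempty classes with no rainbow cycle. *)
Definition rcf_coloring (e : rel T) (P : {set {set {set T}}}) : Prop :=
  partition P (edges e) /\
  forall s, is_graph_cycle e s -> ~ rainbow P (cycle_edges s).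

Definition colors_at_most_twice (P : {set {set {set T}}}) : Prop :=
  forall B, B \in P -> #|B| <= 2.

Inductive H0_constructible : {set T} -> {set {set T}} -> Prop :=
  | H0_K2 u v : u != v -> H0_constructible [set u; v] [set [set u; v]]
  | H0_step V E z u v :
      H0_constructible V E -> z \notin V -> u \in V -> v \in V -> u != v ->
      H0_constructible (z |: V) ([set z; u] |: ([set z; v] |: E)).

End Graphs.

(* A transversal of a rainbow-circuit-free colouring is rainbow, hence a forest: so a
   colouring of a graph with 2|V| - 3 edges by classes of size at most 2 has exactly
   |V| - 1 classes, exactly one of which is a singleton {xy}.  Applying the same bound
   to transversals avoiding a vertex z shows that some class lies in the star of z;
   this assigns a class to each vertex, injectively away from x and y.  If no such
   vertex z had its whole star inside its class, each would have an edge zw in the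
   class of w, and following these edges would close a rainbow cycle.  So some z has
   degree 2 with both edges forming one class: deleting it undoes an (H0) step, and
   induction applies.  Conversely, an (H0) step adds the two new edges as one class,
   and any cycle through the new vertex uses both of them. *)

From mathcomp Require Import all_boot zify.
Set Implicit Arguments. Unset Strict Implicit. Unset Printing Implicit Defensive.

Lemma first_repeat (T : finType) (v : nat -> T) :
  exists i j, [/\ i < j, v i = v j & {in gtn j &, injective v}].
Proof.
pose P j := [exists i : 'I_j, v i == v j].
have exP : exists j, P j.
  have /injectivePn [i [j ij vij]] : ~~ injectiveb (fun i : 'I_#|T|.+1 => v i).
    by apply/injectiveP => /leq_card; rewrite card_ord ltnn.
  have [lt|lt|/val_inj eq] := ltngtP i j; last by rewrite eq eqxx in ij.
  - by exists j; apply/existsP; exists (Ordinal lt); rewrite vij.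
  - by exists i; apply/existsP; exists (Ordinal lt); rewrite vij.
case: (ex_minnP exP) => j /existsP [[i /= ij] /eqP vij] j_min.
exists i, j; split=> // a b; rewrite !inE /gtn => aj bj vab.
wlog ab : a b aj bj vab / a <= b => [hwlog|].
  by case: (leqP a b) => [|/ltnW] ba; [|apply/esym]; apply: hwlog.
rewrite leq_eqVlt in ab; case/orP: ab => [/eqP //|ab].
have /j_min : P b by apply/existsP; exists (Ordinal ab); rewrite vab.
by rewrite leqNgt bj.
Qed.

Lemma nonbacktracking_walk_cycle (T : finType) (r : rel T) (v : nat -> T) :
  (forall t, r (v t) (v t.+1)) -> (forall t, v t.+1 != v t) ->
  (forall t, v t.+2 != v t) ->
  exists s, [/\ uniq s, 2 < size s & cycle r s].
Proof.
move=> r_v v1 v2; have [i [j [ij vij v_inj]]] := first_repeat v.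
have path_v k a : path r (v a) (map v (iota a.+1 k)).
  by elim: k a => //= k IHk a; rewrite r_v IHk.
exists (map v (iota i (j - i))); split.
- rewrite map_inj_in_uniq ?iota_uniq // => a b.
  by rewrite !mem_iota => /andP [_ aj] /andP [_ bj]; apply: v_inj; rewrite inE /gtn; lia.
- have ne1 : j != i.+1 by apply: contraTneq (v1 i) => ji; rewrite -ji -vij eqxx.
  have ne2 : j != i.+2 by apply: contraTneq (v2 i) => ji; rewrite -ji -vij eqxx.
  rewrite size_map size_iota; lia.
set m := (j - i).-1; have -> : j - i = m.+1 by rewrite /m; lia.
have jm : j = i.+1 + m by rewrite /m; lia.
have close : rcons (map v (iota i.+1 m)) (v i) = map v (iota i.+1 m.+1).
  by rewrite vij jm -map_rcons -cats1 -[m.+1]addn1 iotaD.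
by rewrite /= close path_v.
Qed.

Section UniqCycle.
Variables (T : eqType) (s : seq T).
Hypothesis s_uniq : uniq s.

Lemma next_neq x : 1 < size s -> x \in s -> next s x != x.
Proof.
move=> s_gt1 xs; case: (rot_to xs) => i p s_rot.
have /= /andP [xNp _] : uniq (x :: p) by rewrite -s_rot rot_uniq.
have : 1 < size (x :: p) by rewrite -s_rot size_rot.
rewrite -(next_rot i s_uniq) s_rot; case: p xNp {s_rot} => // y p.
by rewrite inE /next /= eqxx eq_sym => /norP [].
Qed.

Lemma next_next_neq x : 2 < size s -> x \in s -> next s (next s x) != x.
Proof.
move=> s_gt2 xs; case: (rot_to xs) => i p s_rot.
have : uniq (x :: p) by rewrite -s_rot rot_uniq.
have : 2 < size (x :: p) by rewrite -s_rot size_rot.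
rewrite -!(next_rot i s_uniq) s_rot; case: p {s_rot} => [|y [|w p]] //= _.
rewrite !inE => /andP [/norP [xy /norP [xw _]] /andP [/norP [yw _] _]].
by rewrite /next /= eqxx /= [y == x]eq_sym (negbTE xy) eqxx eq_sym.
Qed.

End UniqCycle.

Lemma set2_of_card2 (T : finType) (A : {set T}) x y :
  #|A| = 2 -> x \in A -> y \in A -> x != y -> A = [set x; y].
Proof.
move=> A2 xA yA xy; apply/esym/eqP; rewrite eqEcard cards2 xy A2 leqnn andbT.
by apply/subsetP => w /set2P [] ->.
Qed.

Lemma card2_other (T : finType) (A : {set T}) z :
  #|A| = 2 -> z \in A -> exists2 w, w != z & A = [set z; w].
Proof.
move/eqP/cards2P => [a [b [ab ->]]] /set2P [] ->; first by exists b; rewrite // eq_sym.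
by exists a; rewrite // setUC.
Qed.

Lemma partition_transversal (U : finType) (D : {set U}) (P : {set {set U}}) (q : pred U) :
  partition P D -> (forall B, B \in P -> exists2 a, a \in B & q a) ->
  exists2 X : {set U}, X \subset D &
    [/\ #|X| = #|P|, {in X, forall a, q a} & forall B, B \in P -> #|B :&: X| <= 1].
Proof.
move=> partP hq; have [->|[B0 B0P]] := set_0Vmem P.
  by exists set0; rewrite ?sub0set //; split=> [|a|B]; rewrite ?cards0 ?inE.
have [a0 _ _] := hq B0 B0P; pose pk (B : {set U}) := odflt a0 [pick a in B | q a].
have pkP B : B \in P -> pk B \in B /\ q (pk B).
  move=> BP; rewrite /pk; case: pickP => [a /andP [] //|none].
  by have [a aB qa] := hq B BP; move: (none a); rewrite aB qa.
have pk_block B : B \in P -> pblock P (pk B) = B.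
  by move=> BP; apply: def_pblock (partition_trivIset partP) BP (pkP B BP).1.
exists (pk @: P); [|split].
- apply/subsetP => _ /imsetP [B BP ->].
  by rewrite -(cover_partition partP); apply/bigcupP; exists B; [|apply: (pkP B BP).1].
- by rewrite (card_in_imset (can_in_inj pk_block)).
- by move=> _ /imsetP [B BP ->]; apply: (pkP B BP).2.
move=> B BP; apply/card_le1_eqP => a b.
rewrite !inE => /andP [aB /imsetP [B1 B1P aE]] /andP [bB /imsetP [B2 B2P bE]].
have tP := partition_trivIset partP.
have B1E : B1 = B by rewrite -(pk_block B1 B1P) -aE (def_pblock tP BP aB).
have B2E : B2 = B by rewrite -(pk_block B2 B2P) -bE (def_pblock tP BP bB).
by rewrite aE bE B1E B2E.
Qed.

Section EdgeSets.
Variable T : finType.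
Implicit Types (s : seq T) (W : {set T}) (F E D : {set {set T}}) (P : {set {set {set T}}}).

Definition is_cycle_in F s := [/\ uniq s, 2 < size s & cycle_edges s \subset F].

Definition rainbow_cycle_free E P := forall s, is_cycle_in E s -> ~ rainbow P (cycle_edges s).

Definition star (z : T) : {set {set T}} := [set A : {set T} | z \in A].

Lemma set2_next_inj s : uniq s -> 2 < size s -> {in s &, injective (fun x => [set x; next s x])}.
Proof.
move=> s_uniq s_gt2 x y xs ys /setP eq_xy.
have /set2P [//|ynx] : y \in [set x; next s x] by rewrite eq_xy set21.
have /set2P [//|xny] : x \in [set y; next s y] by rewrite -eq_xy set21.
by move: (next_next_neq s_uniq s_gt2 xs); rewrite -ynx -xny eqxx.
Qed.

Lemma card_cycle_in F s : is_cycle_in F s -> 2 < #|F|.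
Proof.
case=> s_uniq s_gt2 sF; apply: leq_trans (subset_leq_card sF).
by rewrite /cycle_edges card_in_imset; [rewrite (card_uniqP s_uniq) | exact: set2_next_inj].
Qed.

Lemma cycle_through_star_class F s (B : {set {set T}}) z :
  is_cycle_in F s -> z \in s -> {in F, forall A : {set T}, z \in A -> A \in B} ->
  1 < #|B :&: cycle_edges s|.
Proof.
move=> [s_uniq s_gt2 sF] zs star_zB; set p := prev s z.
have ps : p \in s by rewrite mem_prev.
have edge_in x : x \in s -> [set x; next s x] \in cycle_edges s by move=> xs; apply: imset_f.
have edge_inB x : x \in s -> z \in [set x; next s x] -> [set x; next s x] \in B :&: cycle_edges s.
  by move=> xs zx; rewrite inE edge_in // andbT star_zB // (subsetP sF) ?edge_in.
apply/card_gt1P; exists [set z; next s z], [set p; next s p].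
split; [by rewrite edge_inB ?set21 | by rewrite edge_inB ?next_prev ?set22 |].
apply/negP => /eqP eq_zp; have zp := set2_next_inj s_uniq s_gt2 zs ps eq_zp.
by move: (next_neq s_uniq (ltnW s_gt2) ps); rewrite next_prev // -zp eqxx.
Qed.

Lemma cycle_of_min_degree2 F :
  {in F, forall A : {set T}, #|A| = 2} -> 0 < #|F| ->
  (forall A z, A \in F -> z \in A -> 1 < #|F :&: star z|) ->
  exists s, is_cycle_in F s.
Proof.
move=> F2 F_gt0 deg.
have step p c : [set p; c] \in F -> exists w, ([set c; w] \in F) && (w != p).
  move=> pcF; have /card_gt1P [A1 [A2 []]] := deg _ c pcF (set22 p c).
  rewrite !inE => /andP [A1F cA1] /andP [A2F cA2] A12.
  have [w1 _ A1E] := card2_other (F2 _ A1F) cA1.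
  have [w2 _ A2E] := card2_other (F2 _ A2F) cA2.
  have [w1p|w1p] := eqVneq w1 p; last by exists w1; rewrite -A1E A1F.
  exists w2; rewrite -A2E A2F -w1p; apply: contraNneq A12 => w21.
  by rewrite A1E A2E w21.
pose nxt p c := odflt c [pick w | ([set c; w] \in F) && (w != p)].
have nxtP p c : [set p; c] \in F -> ([set c; nxt p c] \in F) && (nxt p c != p).
  move=> pcF; rewrite /nxt; case: pickP => [//|none].
  by have [w] := step p c pcF; rewrite none.
have /card_gt0P [A0 A0F] := F_gt0.
have /eqP/cards2P [x0 [y0 [_ A0E]]] := F2 _ A0F.
pose st t := iter t (fun q : T * T => (q.2, nxt q.1 q.2)) (x0, y0).
have stF t : [set (st t).1; (st t).2] \in F.
  by elim: t => [|t IHt]; [rewrite -A0E | have /andP [] := nxtP _ _ IHt].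
pose v t := (st t).1.
have vF t : [set v t; v t.+1] \in F by apply: stF.
have [] := @nonbacktracking_walk_cycle T (fun x y => [set x; y] \in F) v vF.
- by move=> t; have := F2 _ (vF t); rewrite cards2 eq_sym; case: (_ != _).
- by move=> t; have /andP [] := nxtP _ _ (stF t).
move=> s [s_uniq s_gt2 s_cycle]; exists s; split=> //.
by apply/subsetP => _ /imsetP [x xs ->]; apply: next_cycle s_cycle xs.
Qed.

Lemma cycle_of_card_ge W F :
  {in F, forall A : {set T}, #|A| = 2} -> {in F, forall A : {set T}, A \subset W} ->
  0 < #|F| -> #|W| <= #|F| -> exists s, is_cycle_in F s.
Proof.
(* Delete a vertex of degree at most 1 if there is one, else walk without backtracking. *)
have [n] := ubnP #|W|; elim: n W F => // n IHn W F Wn F2 FW F_gt0 WF.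
case: (boolP [exists z in W, #|F :&: star z| <= 1]) => [/exists_inP [z zW z_deg]|]; last first.
  move/exists_inPn => deg; apply: cycle_of_min_degree2 => // A z AF zA.
  by rewrite ltnNge deg // (subsetP (FW _ AF)).
have /card_gt0P [A0 A0F] := F_gt0.
have W_gt1 : 1 < #|W| by rewrite -(F2 _ A0F) subset_leq_card ?FW.
have cardF : #|F| <= #|F :\: star z|.+1 by rewrite -(cardsID (star z) F) in WF *; lia.
have [|||||s [s_uniq s_gt2 sF]] := IHn (W :\ z) (F :\: star z).
- by rewrite (cardsD1 z W) zW in Wn.
- by move=> A /setDP [AF _]; apply: F2.
- move=> A /setDP [AF]; rewrite inE => zA; apply/subsetP => w wA.
  by rewrite !inE (subsetP (FW _ AF)) // andbT; apply: contraNneq zA => <-.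
- by rewrite (cardsD1 z W) zW in WF W_gt1; lia.
- by rewrite (cardsD1 z W) zW in WF; lia.
by exists s; split=> //; apply: subset_trans sF (subsetDl _ _).
Qed.

Lemma card_classes_lt E P (q : pred {set T}) W :
  {in E, forall A : {set T}, #|A| = 2} -> partition P E -> rainbow_cycle_free E P ->
  (forall B, B \in P -> exists2 A, A \in B & q A) ->
  {in E, forall A, q A -> A \subset W} -> 0 < #|P| -> #|P| < #|W|.
Proof.
move=> E2 partP Prc hq qW P_gt0.
have [X XE [cardX qX rainbowX]] := partition_transversal partP hq.
rewrite ltnNge; apply/negP => WX.
have [||||s [s_uniq s_gt2 sX]] := @cycle_of_card_ge W X.
- by move=> A /(subsetP XE); apply: E2.
- by move=> A AX; apply: qW (qX A AX); apply: (subsetP XE).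
- by rewrite cardX.
- by rewrite cardX.
apply: (Prc s); first by split=> //; apply: subset_trans sX XE.
by move=> B BP; apply: leq_trans (rainbowX B BP); apply/subset_leq_card/setIS.
Qed.

Lemma rainbow_cycle_free_setD E D P :
  rainbow_cycle_free E P -> rainbow_cycle_free (E :\: D) (P :\ D).
Proof.
move=> Prc s [s_uniq s_gt2 sED] rainbow_s.
apply: (Prc s); first by split=> //; apply: subset_trans sED (subsetDl _ _).
move=> B BP; have [->|BD] := eqVneq B D; last by apply: rainbow_s; rewrite !inE BD.
rewrite (_ : D :&: _ = set0) ?cards0 //; apply/setP => A; rewrite !inE.
by apply/andP => -[AD /(subsetP sED)]; rewrite inE AD.
Qed.

Lemma rainbow_cycle_free_add_star E D P z :
  rainbow_cycle_free E P -> {in E, forall A : {set T}, z \notin A} -> D \subset star z ->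
  rainbow_cycle_free (D :|: E) (D |: P).
Proof.
move=> Prc zE Dz s cs rainbow_s; have [s_uniq s_gt2 sDE] := cs.
have [zs|zNs] := boolP (z \in s).
  have : 1 < #|D :&: cycle_edges s|.
    apply: cycle_through_star_class cs zs _ => A; rewrite inE => /orP [//|/zE zNA zA].
    by rewrite zA in zNA.
  by rewrite ltnNge rainbow_s ?setU11.
apply: (Prc s); last by move=> B BP; apply: rainbow_s; rewrite inE BP orbT.
split=> //; apply/subsetP => A As; have := subsetP sDE A As; rewrite inE => /orP [AD|//].
have zA : z \in A by have := subsetP Dz A AD; rewrite inE.
by case/imsetP: As zA => x xs -> /set2P [] zx; move: zNs; rewrite zx ?mem_next xs.
Qed.

End EdgeSets.

Section Forward.
Variable T : finType.
Variables (V : {set T}) (E : {set {set T}}) (P : {set {set {set T}}}).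
Hypothesis E2 : {in E, forall A : {set T}, #|A| = 2}.
Hypothesis EV : {in E, forall A : {set T}, A \subset V}.
Hypothesis partP : partition P E.
Hypothesis P2 : colors_at_most_twice P.
Hypothesis Prc : rainbow_cycle_free E P.
Hypothesis cardE : #|E| + 3 = 2 * #|V|.

Lemma mem_edge_set2 a b : [set a; b] \in E -> [/\ a \in V, b \in V & a != b].
Proof.
move=> abE; have /subsetP abV := EV abE.
by rewrite !abV ?set21 ?set22 //; have := E2 abE; rewrite cards2; case: (a != b).
Qed.

Lemma card_vertices : #|V| = #|P|.+1.
Proof.
have cardEP : #|E| <= 2 * #|P|.
  by rewrite (card_partition partP) mulnC -sum_nat_const; apply: leq_sum.
have P_gt0 : 0 < #|P| by lia.
suff : #|P| < #|V| by lia.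
apply: (card_classes_lt (q := predT)) E2 partP Prc _ _ P_gt0 => [B BP|A AE _].
  by have /set0Pn [A AB] := partition_neq0 partP BP; exists A.
exact: EV.
Qed.

Lemma singleton_class_unique B1 B2 :
  B1 \in P -> B2 \in P -> #|B1| = 1 -> #|B2| = 1 -> B1 = B2.
Proof.
move=> B1P B2P B1_1 B2_1; apply/eqP/negPn/negP => B12.
have defect : \sum_(B in P) #|B| + \sum_(B in P) (#|B| == 1) <= \sum_(B in P) 2.
  by rewrite -big_split; apply: leq_sum => B /P2; case: #|B| => [|[|[|]]].
have : 2 <= \sum_(B in P) (#|B| == 1).
  rewrite (bigD1 B1) //= (bigD1 B2) /=; last by rewrite B2P eq_sym B12.
  by rewrite B1_1 B2_1.
move: defect; rewrite sum_nat_const -(card_partition partP).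
have := card_vertices; lia.
Qed.

(* The default [set0] is only reached outside V (see star_class_spec). *)
Definition star_class z := odflt set0 [pick B in P | B \subset star z].

Lemma star_class_spec z : z \in V -> star_class z \in P /\ star_class z \subset star z.
Proof.
move=> zV; rewrite /star_class; case: pickP => [B /andP [] //|none]; exfalso.
(* Otherwise every class has an edge avoiding z, which lives on V :\ z. *)
have : #|P| < #|V :\ z|.
  apply: (card_classes_lt (q := fun A => z \notin A)) E2 partP Prc _ _ _.
  - move=> B BP; have /subsetPn [A AB] : ~~ (B \subset star z).
      by move: (none B); rewrite BP => /negbT.
    by rewrite inE; exists A.
  - move=> A AE zA; apply/subsetP => w wA; rewrite !inE (subsetP (EV AE)) // andbT.
    by apply: contraNneq zA => <-.
  - by have := card_vertices; lia.
by have := cardsD1 z V; rewrite zV card_vertices; lia.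
Qed.

Lemma star_class_pair x y B :
  x != y -> B \in P -> B \subset star x -> B \subset star y -> B = [set [set x; y]].
Proof.
move=> xy BP Bx By; have BE := partitionS partP BP.
apply/eqP; rewrite eqEcard cards1 card_gt0 (partition_neq0 partP BP) andbT.
apply/subsetP => A AB; rewrite inE; apply/eqP/set2_of_card2 => //.
- exact: E2 (subsetP BE A AB).
- by have := subsetP Bx A AB; rewrite inE.
- by have := subsetP By A AB; rewrite inE.
Qed.

Lemma exists_singleton_class :
  exists x y, [/\ x \in V, y \in V, x != y & [set [set x; y]] \in P].
Proof.
case: (boolP [exists x in V, exists y in V, (x != y) && (star_class x == star_class y)]).
  case/exists_inP => x xV /exists_inP [y yV /andP [xy /eqP same]]; exists x, y; split=> //.
  have [xP xstar] := star_class_spec xV; have [_ ystar] := star_class_spec yV.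
  by rewrite -(star_class_pair xy xP xstar) // same.
move/exists_inPn => none; exfalso.
have inj : {in V &, injective star_class}.
  move=> x y xV yV same; apply/eqP/negPn/negP => xy.
  by have /exists_inPn/(_ y yV) := none x xV; rewrite xy same eqxx.
have : star_class @: V \subset P.
  by apply/subsetP => _ /imsetP [z zV ->]; apply: (star_class_spec zV).1.
by move/subset_leq_card; rewrite card_in_imset // card_vertices ltnn.
Qed.

Section SingletonClass.
Variables x y : T.
Hypotheses (xV : x \in V) (yV : y \in V) (xy : x != y) (s0P : [set [set x; y]] \in P).

Let s0 := [set [set x; y]].
Let R := V :\: [set x; y].
Let RV : R \subset V := subsetDl V _.

Lemma card_R : #|R| = #|P|.-1.
Proof.
have xyV : [set x; y] \subset V by apply/subsetP => w /set2P [] ->.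
by rewrite /R cardsD (setIidPr xyV) cards2 xy card_vertices subSS subn1.
Qed.

Lemma star_class_R_neq z : z \in R -> star_class z != s0.
Proof.
move=> zR; apply/negP => /eqP zs0.
have /(subsetP (star_class_spec (subsetP RV z zR)).2) : [set x; y] \in star_class z.
  by rewrite zs0 set11.
by rewrite inE => zxy; move: zR; rewrite inE zxy.
Qed.

Lemma star_class_R_inj : {in R &, injective star_class}.
Proof.
move=> a b aR bR same; apply/eqP/negPn/negP => ab.
have [aP astar] := star_class_spec (subsetP RV a aR).
have [_ bstar] := star_class_spec (subsetP RV b bR).
have single : star_class a = [set [set a; b]].
  by apply: star_class_pair ab aP astar _; rewrite same.
have := singleton_class_unique aP s0P; rewrite single !cards1 => /(_ erefl erefl) as0.
by move: (star_class_R_neq aR); rewrite single as0 eqxx.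
Qed.

Lemma star_class_edge_antisym a b :
  a \in R -> b \in R -> [set a; b] \in star_class b -> [set a; b] \in star_class a -> a = b.
Proof.
move=> aR bR ab_b ab_a; have tP := partition_trivIset partP.
have [aP _] := star_class_spec (subsetP RV a aR).
have [bP _] := star_class_spec (subsetP RV b bR).
by apply: star_class_R_inj; rewrite // -(def_pblock tP aP ab_a) (def_pblock tP bP ab_b).
Qed.

Lemma star_class_R_onto B : B \in P -> B != s0 -> exists2 w, w \in R & B = star_class w.
Proof.
move=> BP Bs0; have : B \in star_class @: R.
  suff -> : star_class @: R = P :\ s0 by rewrite !inE Bs0.
  apply/eqP; rewrite eqEcard (card_in_imset star_class_R_inj).
  rewrite card_R (cardsD1 s0 P) s0P leqnn andbT.
  apply/subsetP => _ /imsetP [z zR ->].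
  by rewrite !inE star_class_R_neq // (star_class_spec (subsetP RV z zR)).1.
by move=> /imsetP [w wR ->]; exists w.
Qed.

Lemma star_class_escape z A :
  z \in R -> A \in E -> z \in A -> A \notin star_class z ->
  exists2 w, w \in R & (w != z) && ([set z; w] \in star_class w).
Proof.
move=> zR AE zA Az; set B := pblock P A.
have AB : A \in B by rewrite mem_pblock (cover_partition partP).
have BP : B \in P by rewrite pblock_mem ?(cover_partition partP).
have Bs0 : B != s0.
  apply: contraTneq zA => Bs0; move: AB; rewrite Bs0 inE => /eqP ->.
  by move: zR; rewrite inE => /andP [].
have [w wR Bw] := star_class_R_onto BP Bs0.
have wA : w \in A.
  by have := subsetP (star_class_spec (subsetP RV w wR)).2 A; rewrite -Bw inE; apply.
have wz : w != z by apply: contraNneq Az => <-; rewrite -Bw.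
have AE2 : A = [set z; w] by apply: set2_of_card2 (E2 AE) zA wA _; rewrite eq_sym.
by exists w; rewrite // wz -AE2 -Bw.
Qed.

Lemma star_class_cycle_rainbow s :
  uniq s -> 2 < size s -> cycle (fun a b => (a \in R) && ([set a; b] \in star_class b)) s ->
  is_cycle_in E s /\ rainbow P (cycle_edges s).
Proof.
move=> s_uniq s_gt2 s_cycle.
have step a : a \in s -> next s a \in R /\ [set a; next s a] \in star_class (next s a).
  move=> a_s; have /andP [_ ->] := next_cycle s_cycle a_s.
  have na_s : next s a \in s by rewrite mem_next.
  by have /andP [] := next_cycle s_cycle na_s.
have class_P a : a \in s -> star_class (next s a) \in P.
  by move=> a_s; apply: (star_class_spec (subsetP RV _ (step a a_s).1)).1.
split.
  split=> //; apply/subsetP => _ /imsetP [a a_s ->].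
  exact: (subsetP (partitionS partP (class_P a a_s))) _ (step a a_s).2.
move=> B BP; have tP := partition_trivIset partP.
have class_B a : a \in s -> [set a; next s a] \in B -> star_class (next s a) = B.
  by move=> a_s aB; rewrite -(def_pblock tP (class_P a a_s) (step a a_s).2) (def_pblock tP BP aB).
apply/card_le1_eqP => A1 A2 /setIP [A1B /imsetP [a1 a1s A1E]] /setIP [A2B /imsetP [a2 a2s A2E]].
subst A1 A2; have := star_class_R_inj (step a1 a1s).1 (step a2 a2s).1.
rewrite !class_B // => /(_ erefl) n12.
by rewrite -(prev_next s_uniq a1) n12 prev_next.
Qed.

Lemma exists_full_star :
  0 < #|R| -> exists2 z, z \in R & {in E, forall A : {set T}, z \in A -> A \in star_class z}.
Proof.
move=> R_gt0.
case: (boolP [exists z in R, [forall A in E, (z \in A) ==> (A \in star_class z)]]).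
  by case/exists_inP => z zR /forall_inP full; exists z => // A /full /implyP.
move/exists_inPn => escape; exfalso.
(* Each z in R has an edge zw in the class of w; iterating z |-> w gives a rainbow cycle. *)
pose toward z w := [&& w \in R, w != z & [set z; w] \in star_class w].
pose g z := odflt z [pick w | toward z w].
have gP z : z \in R -> toward z (g z).
  move=> zR; rewrite /g; case: pickP => [//|none].
  have /forall_inPn [A AE] := escape z zR; rewrite negb_imply => /andP [zA Az].
  have [w wR /andP [wz zw]] := star_class_escape zR AE zA Az.
  by move: (none w); rewrite /toward wR wz zw.
have /card_gt0P [z0 z0R] := R_gt0.
pose v t := iter t g z0.
have vR t : v t \in R by elim: t => //= t /gP /and3P [].
have toward_v t : toward (v t) (v t.+1) := gP _ (vR t).
have [|||s [s_uniq s_gt2 s_cycle]] :=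
  @nonbacktracking_walk_cycle T (fun a b => (a \in R) && ([set a; b] \in star_class b)) v.
- by move=> t; have /and3P [_ _ ->] := toward_v t; rewrite vR.
- by move=> t; have /and3P [] := toward_v t.
- move=> t; apply/eqP => v2t; have /and3P [_ v1t e1] := toward_v t.
  have /and3P [_ _ e2] := toward_v t.+1; rewrite v2t setUC in e2.
  by move: v1t; rewrite (star_class_edge_antisym (vR _) (vR _) e1 e2) eqxx.
by have [] := star_class_cycle_rainbow s_uniq s_gt2 s_cycle; apply: Prc.
Qed.

End SingletonClass.

Lemma exists_removable_vertex :
  2 < #|V| -> exists z u v, [/\ u != v, [set [set z; u]; [set z; v]] \in P
                              & E :&: star z = [set [set z; u]; [set z; v]]].
Proof.
move=> V_gt2; have [x [y [xV yV xy s0P]]] := exists_singleton_class.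
have [|z zR full] := exists_full_star xV yV xy s0P.
  by rewrite (card_R xV yV xy); move: V_gt2; rewrite card_vertices; lia.
have zV : z \in V by move: zR; rewrite inE => /andP [].
have [DP Dstar] := star_class_spec zV; set D := star_class z in DP Dstar full *.
have DE : D \subset E := partitionS partP DP.
have ED : E :&: star z = D.
  apply/eqP; rewrite eqEsubset subsetI DE Dstar !andbT.
  by apply/subsetP => A /setIP [AE]; rewrite inE; apply: full.
have /cards2P [A1 [A2 [A12 D12]]] : #|D| == 2.
  have := P2 DP; have := partition_neq0 partP DP; rewrite -card_gt0.
  case D1: #|D| => [|[|[|]]] // _ _.
  have := singleton_class_unique DP s0P D1 (cards1 _) => Ds0.
  by move: (star_class_R_neq zR); rewrite -/D Ds0 eqxx.
have zA A : A \in D -> z \in A by move/(subsetP Dstar); rewrite inE.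
have A1D : A1 \in D by rewrite D12 set21.
have A2D : A2 \in D by rewrite D12 set22.
have [u _ A1E] := card2_other (E2 (subsetP DE _ A1D)) (zA _ A1D).
have [v _ A2E] := card2_other (E2 (subsetP DE _ A2D)) (zA _ A2D).
exists z, u, v; rewrite -A1E -A2E -D12; split=> //.
by apply: contraNneq A12 => uv; rewrite A1E A2E uv.
Qed.

End Forward.

Lemma H0_of_rainbow_cycle_free (T : finType) (V : {set T}) (E : {set {set T}})
    (P : {set {set {set T}}}) :
  {in E, forall A : {set T}, #|A| = 2} -> {in E, forall A : {set T}, A \subset V} ->
  partition P E -> colors_at_most_twice P -> rainbow_cycle_free E P ->
  #|E| + 3 = 2 * #|V| -> H0_constructible V E.
Proof.
have [n] := ubnP #|V|; elim: n V E P => // n IHn V E P Vn E2 EV partP P2 Prc cardE.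
have [V_gt2|V_le2] := ltnP 2 #|V|; last first.
  have /cards1P [A EA] : #|E| == 1 by apply/eqP; lia.
  have AE : A \in E by rewrite EA set11.
  have /eqP/cards2P [a [b [ab Aab]]] := E2 _ AE.
  have -> : V = [set a; b] by apply/esym/eqP; rewrite eqEcard -Aab EV // (E2 _ AE).
  by rewrite EA Aab; apply: H0_K2.
have [z [u [v [uv DP ED]]]] := exists_removable_vertex E2 EV partP P2 Prc cardE V_gt2.
set D := [set [set z; u]; [set z; v]] in DP ED.
have DE : D \subset E by rewrite -ED subsetIl.
have [zV uV zu] := mem_edge_set2 E2 EV (subsetP DE _ (set21 _ _)).
have [_ vV zv] := mem_edge_set2 E2 EV (subsetP DE _ (set22 _ _)).
have cardV : #|V| = #|V :\ z|.+1 by rewrite (cardsD1 z V) zV.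
have cardD : #|D| = 2.
  rewrite cards2; apply/eqP; rewrite eqSS eqb1; apply: contraNneq uv => /setP /(_ u).
  by rewrite set22 => /esym/set2P [uz|->]; rewrite ?uz ?eqxx in zu *.
have reduced : H0_constructible (V :\ z) (E :\: D).
  apply: (IHn _ _ (P :\ D)).
  - by rewrite -ltnS -cardV.
  - by move=> A /setDP [AE _]; apply: E2.
  - move=> A /setDP [AE AD]; apply/subsetP => w wA; rewrite !inE (subsetP (EV _ AE)) // andbT.
    by apply: contraNneq AD => wz; rewrite -ED inE AE inE -wz wA.
  - exact: partitionD1.
  - by move=> B /setD1P [_ /P2].
  - exact: rainbow_cycle_free_setD.
  - by rewrite cardsD (setIidPr DE) cardD; lia.
have uVz : u \in V :\ z by rewrite !inE eq_sym zu.
have vVz : v \in V :\ z by rewrite !inE eq_sym zv.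
have := H0_step reduced (negbT (setD11 z V)) uVz vVz uv.
by rewrite setD1K // setUA -/D -{1}(setIidPr DE) setID.
Qed.

Lemma H0_edges_sub (T : finType) (V : {set T}) (E : {set {set T}}) :
  H0_constructible V E -> {in E, forall A : {set T}, A \subset V}.
Proof.
elim=> [u v _|{}V {}E z u v _ EV _ uV vV _] A; first by rewrite inE => /eqP ->.
rewrite !inE => /or3P [/eqP ->|/eqP ->|/EV AV]; last exact: subset_trans AV (subsetUr _ _).
- by apply/subsetP => w /set2P [] ->; rewrite !inE ?eqxx ?uV ?orbT.
- by apply/subsetP => w /set2P [] ->; rewrite !inE ?eqxx ?vV ?orbT.
Qed.

Lemma rainbow_cycle_free_of_H0 (T : finType) (V : {set T}) (E : {set {set T}}) :
  H0_constructible V E ->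
  exists P, [/\ partition P E, colors_at_most_twice P & rainbow_cycle_free E P].
Proof.
elim=> [u v uv|{}V {}E z u v H0E [P [partP P2 Prc]] zV uV vV uv].
  exists [set [set [set u; v]]]; split.
  - rewrite /partition cover1 trivIset1 eqxx /= inE.
    by apply/eqP => /setP /(_ [set u; v]); rewrite !inE eqxx.
  - by move=> B /set1P ->; rewrite cards1.
  - by move=> s /card_cycle_in; rewrite cards1.
set D := [set [set z; u]; [set z; v]].
have zE : {in E, forall A : {set T}, z \notin A}.
  by move=> A /(H0_edges_sub H0E) /subsetP AV; apply: contra zV => /AV.
have Dz : D \subset star z by apply/subsetP => A /set2P [] ->; rewrite inE set21.
exists (D |: P); rewrite setUA; split.
- apply: partitionU1 partP _ _; first by apply/set0Pn; exists [set z; u]; rewrite set21.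
  rewrite disjoints_subset; apply/subsetP => A AD; rewrite inE.
  have zA : z \in A by have := subsetP Dz A AD; rewrite inE.
  by apply/negP => /zE; rewrite zA.
- by move=> B /setU1P [->|/P2 //]; rewrite cards2; case: (_ != _).
- exact: rainbow_cycle_free_add_star Prc zE Dz.
Qed.

Lemma mem_edges_set2 (T : finType) (e : rel T) x y :
  symmetric e -> ([set x; y] \in edges e) = e x y.
Proof.
move=> e_sym; apply/idP/idP => [|exy]; rewrite inE; last first.
  by apply/existsP; exists x; apply/existsP; exists y; rewrite exy eqxx.
case/existsP => a /existsP [b /andP [eab /eqP xyab]].
have x_ab : x \in [set a; b] by rewrite -xyab set21.
have y_ab : y \in [set a; b] by rewrite -xyab set22.
have [a_xy b_xy] : a \in [set x; y] /\ b \in [set x; y] by rewrite xyab set21 set22.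
move: eab x_ab y_ab; case/set2P: a_xy => ->; case/set2P: b_xy => -> //.
- by rewrite setUid => ? _ /set1P ->.
- by rewrite e_sym.
- by rewrite setUid => ? /set1P ->.
Qed.

Lemma card_edges (T : finType) (e : rel T) :
  irreflexive e -> {in edges e, forall A : {set T}, #|A| = 2}.
Proof.
move=> e_irr A; rewrite inE => /existsP [x /existsP [y /andP [exy /eqP ->]]].
by rewrite cards2; case: (eqVneq x y) exy => [->|]; rewrite ?e_irr.
Qed.

Lemma is_graph_cycleE (T : finType) (e : rel T) s :
  symmetric e -> is_graph_cycle e s <-> is_cycle_in (edges e) s.
Proof.
move=> e_sym; split.
- case=> /andP [s_cycle s_uniq] s_gt2; split=> //; apply/subsetP => _ /imsetP [x xs ->].
  by rewrite mem_edges_set2 // (next_cycle s_cycle xs).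
- case=> s_uniq s_gt2 sE; split=> //; rewrite /ucycle s_uniq andbT.
  apply: (cycle_from_next s_uniq) => x xs; rewrite -mem_edges_set2 //.
  by apply: (subsetP sE); apply: imset_f.
Qed.

Lemma rcf_coloringE (T : finType) (e : rel T) P :
  symmetric e -> rcf_coloring e P <-> partition P (edges e) /\ rainbow_cycle_free (edges e) P.
Proof.
move=> e_sym; split=> -[partP Pfree]; split=> // s.
- by move/(is_graph_cycleE s e_sym); apply: Pfree.
- by move/(is_graph_cycleE s e_sym); apply: Pfree.
Qed.

Theorem theorem10 (T : finType) (e : rel T)
  (e_sym : symmetric e) (e_irr : irreflexive e)
  (hcard : #|edges e| + 3 = 2 * #|T|) :
  (exists P : {set {set {set T}}}, rcf_coloring e P /\ colors_at_most_twice P)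
  <-> H0_constructible [set: T] (edges e).
Proof.
split.
- case=> P [/(rcf_coloringE P e_sym) [partP Pfree] P2].
  apply: (H0_of_rainbow_cycle_free (card_edges e_irr) _ partP P2 Pfree).
    by move=> A _; apply: subsetT.
  by rewrite cardsT.
- case/rainbow_cycle_free_of_H0 => P [partP P2 Pfree].
  by exists P; split=> //; apply/rcf_coloringE.
Qed.
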